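(* Let $S\subset\mathbb{R}^q$ be compact and $\ell:\mathbb{R}^q\times\mathbb{R}^q\to(0,1)$ continuous. Let $s\in S$ and let $(\xi_k)_{k\in\mathbb{N}}\subset\mathbb{R}^q$ be $n$-periodic for some $n\in\mathbb{N}$, i.e. $\xi_{k+n}=\xi_k$ for all $k$. Let $d_1,d_2,\dots\in\{0,1\}$ be independent random variables with $\Pr(d_k=1)=\ell(s,\xi_k)$. Let $c_1,\dots,c_M\in S$ be distinct, let $\hat p_0:\{1,\dots,M\}\to(0,1)$ with $\sum_i\hat p_0(i)=1$, and define $\hat p_k$ by $$\hat p_k(i\mid d_{1:k};\xi_{1:k})=\frac{g(d_k\mid c_i;\xi_k)\,\hat p_{k-1}(i\mid d_{1:k-1};\xi_{1:k-1})}{\sum_{j=1}^M g(d_k\mid c_j;\xi_k)\,\hat p_{k-1}(j\mid d_{1:k-1};\xi_{1:k-1})},$$ where $g(d\mid x;\xi)=\ell(x,\xi)^d(1-\ell(x,\xi))^{1-d}$. Let $$\mathcal{O}=\{i\in\{1,\dots,M\}: \hat p_k(i\mid d_{1:k};\xi_{1:k})\to 0 \text{ almost surely as } k\to\infty\},$$ and for $x\in\mathbb{R}^q$ let $$K(s\|x;\xi_{1:n})=\sum_{k=1}^n\Big[\ell(s,\xi_k)\ln\frac{\ell(s,\xi_k)}{\ell(x,\xi_k)}+(1-\ell(s,\xi_k))\ln\frac{1-\ell(s,\xi_k)}{1-\ell(x,\xi_k)}\Big].$$ Then $$\{1,\dots,M\}\setminus\mathcal{O}\subset\operatorname*{ar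gmin}_{i\in\{1,\dots,M\}}K(s\|c_i;\xi_{1:n}).$$
   Context: $K(s\|x;\xi_{1:n})$ is the Kullback–Leibler divergence between the joint distribution of $n$ independent binary measurements at $\xi_1,\dots,\xi_n$ with source at $s$ and the one with source at $x$. *)

From HB Require Import structures.
From mathcomp Require Import all_boot all_order all_algebra.
From mathcomp Require Import all_classical all_reals all_analysis.
Set Implicit Arguments. Unset Strict Implicit. Unset Printing Implicit Defensive.
Import Order.TTheory GRing.Theory Num.Theory.
Import numFieldNormedType.Exports.
Local Open Scope classical_set_scope.
Local Open Scope ring_scope.

Definition mutually_independent_bool d (T : measurableType d) (R : realType)
  (P : probability T R) (X : nat -> T -> bool) : Prop :=
  forall (J : seq nat) (b : nat -> bool), uniq J ->
    P (\bigcap_(j in [set` J]) [set w | X j w = b j]) =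
    (\prod_(j <- J) P [set w | X j w = b j])%E.

Definition glik (R : realType) (q : nat) (ell : 'rV[R]_q * 'rV[R]_q -> R)
  (dk : bool) (x xi : 'rV[R]_q) : R :=
  ell (x, xi) ^+ (nat_of_bool dk) * (1 - ell (x, xi)) ^+ (1 - nat_of_bool dk).

(* Posterior phat k i (d_{1:k}; xi_{1:k}); indices of d and xi start at 1
   (d 0, xi 0 are unused). *)
Fixpoint phat (R : realType) (q M : nat) (ell : 'rV[R]_q * 'rV[R]_q -> R)
  (c : 'I_M -> 'rV[R]_q) (p0 : 'I_M -> R) (xi : nat -> 'rV[R]_q)
  (d : nat -> bool) (k : nat) (i : 'I_M) : R :=
  match k with
  | 0 => p0 i
  | k'.+1 =>
      glik ell (d k) (c i) (xi k) * phat ell c p0 xi d k' i /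
      \sum_(j < M) glik ell (d k) (c j) (xi k) * phat ell c p0 xi d k' j
  end.

Definition KL (R : realType) (q : nat) (ell : 'rV[R]_q * 'rV[R]_q -> R)
  (n : nat) (xi : nat -> 'rV[R]_q) (s x : 'rV[R]_q) : R :=
  \sum_(1 <= k < n.+1)
    (ell (s, xi k) * ln (ell (s, xi k) / ell (x, xi k)) +
     (1 - ell (s, xi k)) * ln ((1 - ell (s, xi k)) / (1 - ell (x, xi k)))).

From HB Require Import structures.
From mathcomp Require Import all_boot all_order all_algebra.
From mathcomp Require Import all_classical all_reals all_analysis.
From mathcomp Require Import ring lra.
Set Implicit Arguments. Unset Strict Implicit. Unset Printing Implicit Defensive.
Import Order.TTheory GRing.Theory Num.Theory.
Import numFieldNormedType.Exports.
Local Open Scope classical_set_scope.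
Local Open Scope ring_scope.

(* Suppose K(s||c_i) > K(s||c_j).  The log-likelihood ratio
   L_k = sum_{m <= k} ln (g(d_m | c_i; xi_m) / g(d_m | c_j; xi_m)) is a sum of
   independent bounded increments whose means, by n-periodicity of xi, add up to
   at most C - delta k with delta = (K(s||c_i) - K(s||c_j)) / n > 0.  A Chernoff
   bound makes P(L_k >= - delta k / 4) decay geometrically, so by Borel-Cantelli
   L_k < - delta k / 4 eventually, almost surely.  As
   phat_k(i) <= phat_k(i) / phat_k(j) = (phat_0(i) / phat_0(j)) exp(L_k), the
   posterior of c_i then tends to 0 almost surely, i.e. i is in O. *)

Lemma expR_le1Dx_sqr (R : realType) (y : R) :
  y <= 1 / 2 -> expR y <= 1 + y + 2 * y ^+ 2.
Proof.
move=> y_le.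
have expRN_ge : 1 - y <= expR (- y) by have := expR_ge1Dx (- y); rewrite addrC.
have y_lt1 : 0 < 1 - y by lra.
have quad : 1 <= (1 - y) * (1 + y + 2 * y ^+ 2).
  have : 0 <= y ^+ 2 * (1 - 2 * y) by apply: mulr_ge0; [exact: sqr_ge0 | lra].
  by move=> h; nra.
rewrite -[expR y]invrK -expRN -(ler_pM2l y_lt1); apply: le_trans quad.
by rewrite ler_pdivrMr ?expR_gt0 // mul1r.
Qed.

Lemma mgf_bounded_le (R : realType) (I : finType) (w f : I -> R) (B t : R) :
  (forall x, 0 <= w x) -> \sum_x w x = 1 -> (forall x, `|f x| <= B) ->
  0 <= t -> t * B <= 1 / 2 ->
  \sum_x w x * expR (t * f x) <= expR (t * \sum_x w x * f x + 2 * (t * B) ^+ 2).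
Proof.
move=> w_ge0 w_sum1 fB t_ge0 tB.
have quad x : expR (t * f x) <= 1 + t * f x + 2 * (t * B) ^+ 2.
  have tfB : `|t * f x| <= t * B by rewrite normrM ger0_norm // ler_wpM2l.
  apply: le_trans (expR_le1Dx_sqr _) _.
    exact: le_trans (ler_norm _) (le_trans tfB tB).
  rewrite lerD2l ler_wpM2l // -real_normK ?num_real // ler_sqr ?nnegrE //.
  exact: le_trans (normr_ge0 _) tfB.
apply: le_trans (expR_ge1Dx _).
apply: le_trans (ler_sum _ (fun x _ => ler_wpM2l (w_ge0 x) (quad x))) _.
have -> : \sum_x w x * (1 + t * f x + 2 * (t * B) ^+ 2) =
    \sum_x w x + t * \sum_x w x * f x + 2 * (t * B) ^+ 2 * \sum_x w x.
  by rewrite mulr_sumr mulr_sumr -!big_split /=; apply: eq_bigr => x _; ring.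
by rewrite w_sum1 mulr1 addrA.
Qed.

Lemma expR_cvg0_of_le_linear (R : realType) (L : nat -> R) (del : R) : 0 < del ->
  (\forall k \near \oo, L k <= - (del * k%:R)) -> expR (L k) @[k --> \oo] --> 0.
Proof.
move=> del_gt0 L_le.
apply: (@squeeze_cvgr _ _ _ _ (fun _ => 0) (geometric 1 (expR (- del)))).
- apply: filterS L_le => k Lk; rewrite expR_ge0 /= /geometric mul1r -expRM_natl.
  by rewrite ler_expR mulrN mulrC.
- exact: cvg_cst.
- by apply: cvg_geometric; rewrite ger0_norm ?expR_ge0 // expR_lt1 oppr_lt0.
Qed.

Lemma ler_term_sum (R : numDomainType) (I : finType) (F : I -> R) i :
  (forall j, 0 <= F j) -> F i <= \sum_j F j.
Proof. by move=> F_ge0; rewrite (bigD1 i) //= lerDl sumr_ge0. Qed.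

Lemma periodic_modn (T : Type) (u : nat -> T) n :
  (forall m, u (m + n)%N = u m) -> forall m, u m = u (m %% n)%N.
Proof.
move=> u_per m; rewrite {1}(divn_eq m n) addnC.
elim: (m %/ n)%N => [|q IH]; first by rewrite mul0n addn0.
by rewrite mulSn addnCA addnC u_per IH.
Qed.

Lemma periodic_norm_le (R : numDomainType) (u : nat -> R) n : (0 < n)%N ->
  (forall m, u (m + n)%N = u m) -> forall m, `|u m| <= \sum_(l < n) `|u l|.
Proof.
move=> n_gt0 u_per m; rewrite (periodic_modn u_per).
exact: (@ler_term_sum _ _ (fun l : 'I_n => `|u l|) (Ordinal (ltn_pmod m n_gt0))).
Qed.

Lemma periodic_partial_sum_le (R : realFieldType) (u : nat -> R) n : (0 < n)%N ->
  (forall m, u (m + n)%N = u m) -> forall k,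
  \sum_(m < k) u m <= k%:R / n%:R * \sum_(m < n) u m + 2 * \sum_(m < n) `|u m|.
Proof.
move=> n_gt0 u_per k.
set D : R := \sum_(m < n) u m; set A : R := \sum_(m < n) `|u m|.
have sum_periods q r : \sum_(m < q * n + r) u m = q%:R * D + \sum_(m < r) u m.
  elim: q => [|q IH]; first by rewrite mul0n add0n mul0r add0r.
  rewrite mulSn -addnA big_split_ord /=.
  under [X in _ + X]eq_bigr do rewrite addnC u_per.
  by rewrite IH -natr1 -/D; ring.
have rem_le r : (r < n)%N -> \sum_(m < r) u m <= A.
  move=> r_lt; apply: le_trans (ler_norm _) (le_trans (ler_norm_sum _ _ _) _).
  rewrite (big_ord_widen n (fun m => `|u m|) (ltnW r_lt)) big_mkcond /=.
  by apply: ler_sum => m _; case: ifP.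
have n_gt0' : (0 : R) < n%:R by rewrite ltr0n.
have r_lt := ltn_pmod k n_gt0.
set r := (k %% n)%N; set q := (k %/ n)%N.
have kE : k = (q * n + r)%N by exact: divn_eq.
have rn01 : 0 <= (r%:R / n%:R : R) <= 1.
  apply/andP; split; first exact: divr_ge0.
  by rewrite ler_pdivrMr // mul1r ler_nat ltnW.
have remD : - (r%:R / n%:R * D) <= A :> R.
  have /andP[rn_ge0 rn_le1] := rn01.
  apply: le_trans (ler_norm _) _; rewrite normrN normrM ger0_norm //.
  by apply: le_trans (ler_norm_sum _ _ _); rewrite ler_piMl.
have -> : \sum_(m < k) u m = q%:R * D + \sum_(m < r) u m.
  by rewrite -sum_periods /q /r -divn_eq.
rewrite {1}kE natrD natrM mulrDl mulfK ?gt_eqF //.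
have := rem_le r r_lt; have : 0 <= A by rewrite sumr_ge0.
lra.
Qed.

Section independent_bits.
Context dT (T : measurableType dT) (R : realType) (P : probability T R).
Variables (X : nat -> T -> bool) (p : nat -> R).
Hypothesis mX : forall k b, measurable [set w | X k w = b].
Hypothesis indX : mutually_independent_bool P X.
Hypothesis PX : forall k, (1 <= k)%N -> P [set w | X k w = true] = (p k)%:E.

Lemma prob_bit k b : P [set w | X k.+1 w = b] = (bernoulli_pmf (p k.+1) b)%:E.
Proof.
case: b; first exact: PX.
have -> : [set w | X k.+1 w = false] = ~` [set w | X k.+1 w = true].
  by apply/seteqP; split => w /=; case: (X k.+1 w).
by rewrite probability_setC // PX.
Qed.

Lemma bernoulli_pmf_bit_ge0 k b : 0 <= bernoulli_pmf (p k.+1) b.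
Proof. by rewrite -lee_fin -prob_bit measure_ge0. Qed.

Definition prefix k w : {ffun 'I_k -> bool} := [ffun m : 'I_k => X m.+1 w].

Lemma prefix_eqE k f : [set w | prefix k w = f] =
  \bigcap_(j in [set` iota 1 k]) [set w | X j w = nth false (fgraph f) j.-1].
Proof.
apply/seteqP; split => w /=.
  move=> <- j /=; rewrite mem_iota add1n ltnS => /andP[j_gt0 j_le].
  have j_lt : (j.-1 < k)%N by rewrite prednK.
  by rewrite -[j.-1]/(nat_of_ord (Ordinal j_lt)) nth_fgraph_ord ffunE /= prednK.
move=> Xf; apply/ffunP => m; rewrite ffunE -(nth_fgraph_ord false).
by apply: Xf => /=; rewrite mem_iota add1n !ltnS ltn_ord.
Qed.

Lemma measurable_prefix_eq k f : measurable [set w | prefix k w = f].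
Proof.
by rewrite prefix_eqE bigcap_seq; apply: bigsetI_measurable => j _; exact: mX.
Qed.

Lemma prob_prefix_eq k f :
  P [set w | prefix k w = f] = (\prod_(m < k) bernoulli_pmf (p m.+1) (f m))%:E.
Proof.
rewrite prefix_eqE indX ?iota_uniq // -prodEFin.
rewrite (_ : iota 1 k = index_iota 1 k.+1); last by rewrite /index_iota subn1.
rewrite big_add1 /= big_mkord.
by apply: eq_bigr => m _; rewrite prob_bit /= nth_fgraph_ord.
Qed.

Lemma prefix_inE k (Q : pred {ffun 'I_k -> bool}) :
  [set w | Q (prefix k w)] = \bigcup_(f in [set` Q]) [set w | prefix k w = f].
Proof. by apply/seteqP; split => [w Qw|w [f Qf] /= ->]; [exists (prefix k w)|]. Qed.

Lemma measurable_prefix_in k (Q : pred {ffun 'I_k -> bool}) :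
  measurable [set w | Q (prefix k w)].
Proof.
rewrite prefix_inE; apply: fin_bigcup_measurable; first exact: finite_finset.
by move=> f _; exact: measurable_prefix_eq.
Qed.

Lemma prob_prefix_in k (Q : pred {ffun 'I_k -> bool}) :
  P [set w | Q (prefix k w)] =
  (\sum_(f | Q f) \prod_(m < k) bernoulli_pmf (p m.+1) (f m))%:E.
Proof.
rewrite prefix_inE measure_fin_bigcup //; first last.
- by move=> f _; exact: measurable_prefix_eq.
- by move=> f g _ _ [w [/= <- <-]].
rewrite -sumEFin -(bigfs _ (index_enum_uniq _)); last first.
  by move=> f _; rewrite mem_index_enum.
by apply: eq_bigr => f _; exact: prob_prefix_eq.
Qed.

Lemma ge_partial_sumE (h : nat -> bool -> R) k (a : R) :
  [set w | a <= \sum_(m < k) h m.+1 (X m.+1 w)] =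
  [set w | (fun f => a <= \sum_(m < k) h m.+1 (f m)) (prefix k w)].
Proof. by apply: eq_set => w; under [in RHS]eq_bigr do rewrite ffunE. Qed.

Lemma measurable_ge_partial_sum (h : nat -> bool -> R) k (a : R) :
  measurable [set w | a <= \sum_(m < k) h m.+1 (X m.+1 w)].
Proof.
rewrite ge_partial_sumE.
exact: (measurable_prefix_in (fun f => a <= \sum_(m < k) h m.+1 (f m))).
Qed.

Lemma chernoff_bound (h : nat -> bool -> R) k (a t : R) : 0 <= t ->
  (P [set w | (a <= \sum_(m < k) h m.+1 (X m.+1 w))%R] <=
   (expR (- (t * a)) * \prod_(m < k)
      \sum_(b : bool) bernoulli_pmf (p m.+1) b * expR (t * h m.+1 b))%:E)%E.
Proof.
move=> t_ge0.
rewrite ge_partial_sumE (prob_prefix_in (fun f => a <= \sum_(m < k) h m.+1 (f m))).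
rewrite lee_fin.
set S := fun f : {ffun 'I_k -> bool} => \sum_(m < k) h m.+1 (f m).
set pi := fun f : {ffun 'I_k -> bool} => \prod_(m < k) bernoulli_pmf (p m.+1) (f m).
have pi_ge0 f : 0 <= pi f.
  by apply: prodr_ge0 => m _; exact: bernoulli_pmf_bit_ge0.
apply: (@le_trans _ _ (\sum_f pi f * expR (t * (S f - a)))).
  rewrite [leRHS](bigID (fun f => a <= S f)) /= -[leLHS]addr0.
  apply: lerD; last by apply: sumr_ge0 => f _; rewrite mulr_ge0 ?expR_ge0.
  apply: ler_sum => f aS; rewrite -[leLHS]mulr1 ler_wpM2l ?(pi_ge0 f) //.
  by apply: le_trans (expR_ge1Dx _); rewrite lerDl mulr_ge0 // subr_ge0.
rewrite (bigA_distr_bigA (fun (m : 'I_k) b =>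
  bernoulli_pmf (p m.+1) b * expR (t * h m.+1 b))) mulr_sumr.
rewrite le_eqVlt; apply/predU1P; left; apply: eq_bigr => f _.
rewrite big_split /= -expR_sum -mulr_sumr mulrCA -expRD.
by congr (_ * expR _); rewrite /S; ring.
Qed.

Lemma prob_drift_deviation_geometric (h : nat -> bool -> R) (B del C0 : R) :
  0 < B -> 0 < del -> (forall m b, `|h m b| <= B) ->
  (forall k, \sum_(m < k) \sum_(b : bool) bernoulli_pmf (p m.+1) b * h m.+1 b
               <= C0 - del * k%:R) ->
  exists C r, [/\ 0 <= C, 0 < r < 1 & forall k,
    (P [set w | (- (del / 4 * k%:R) <= \sum_(m < k) h m.+1 (X m.+1 w))%R]
       <= (C * r ^+ k)%:E)%E].
Proof.
move=> B_gt0 del_gt0 hB drift.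
have delB_gt0 : 0 < Num.min del B by rewrite lt_min del_gt0.
(* t B <= 1/2 allows the quadratic bound on expR, and the second-order term
   2 (t B)^2 stays below t del / 2, half of the drift. *)
pose t := Num.min del B / (4 * B ^+ 2).
have t_gt0 : 0 < t by rewrite divr_gt0 // mulr_gt0 // exprn_gt0.
have tBE : t * B = Num.min del B / (4 * B) by rewrite /t; field; rewrite gt_eqF.
have tB : t * B <= 1 / 2.
  have : Num.min del B <= B by rewrite ge_min lexx orbT.
  by rewrite tBE ler_pdivrMr ?mulr_gt0 //; lra.
have tB2 : 2 * (t * B) ^+ 2 <= t * del / 2.
  have -> : 2 * (t * B) ^+ 2 = t * Num.min del B / 2.
    by rewrite [in LHS]expr2 {1}tBE /t; field; rewrite gt_eqF.
  by rewrite ler_pM2r // ler_pM2l // ge_min lexx.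
exists (expR (t * C0)), (expR (- (t * del / 4))); split.
- exact: expR_ge0.
- by rewrite expR_gt0 expR_lt1 oppr_lt0 /= divr_gt0 // mulr_gt0.
move=> k; apply: le_trans (chernoff_bound h k _ (ltW t_gt0)) _; rewrite lee_fin.
have mgf_le : \prod_(m < k) \sum_(b : bool) bernoulli_pmf (p m.+1) b * expR (t * h m.+1 b)
    <= \prod_(m < k) expR (t * \sum_(b : bool) bernoulli_pmf (p m.+1) b * h m.+1 b
                           + 2 * (t * B) ^+ 2).
  apply: ler_prod => m _; apply/andP; split.
    by apply: sumr_ge0 => b _; rewrite mulr_ge0 ?expR_ge0 ?bernoulli_pmf_bit_ge0.
  apply: mgf_bounded_le => //; [exact: bernoulli_pmf_bit_ge0 | | exact: ltW].
  by rewrite big_bool /= addrC subrK.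
apply: le_trans (ler_wpM2l (expR_ge0 _) mgf_le) _.
rewrite -expR_sum -expRM_natl -!expRD ler_expR big_split /= -mulr_sumr.
rewrite sumr_const card_ord -mulr_natr.
have := ler_wpM2l (ltW t_gt0) (drift k).
have := ler_wpM2r (ler0n R k) tB2.
nra.
Qed.

Lemma ae_expR_partial_sum_cvg0 (h : nat -> bool -> R) (B del C0 : R) :
  0 < B -> 0 < del -> (forall m b, `|h m b| <= B) ->
  (forall k, \sum_(m < k) \sum_(b : bool) bernoulli_pmf (p m.+1) b * h m.+1 b
               <= C0 - del * k%:R) ->
  {ae P, forall w, expR (\sum_(m < k) h m.+1 (X m.+1 w)) @[k --> \oo] --> 0}.
Proof.
move=> B_gt0 del_gt0 hB drift.
have [C [r [C_ge0 /andP[r_gt0 r_lt1] PA]]] :=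
  prob_drift_deviation_geometric B_gt0 del_gt0 hB drift.
pose A k := [set w | (- (del / 4 * k%:R) <= \sum_(m < k) h m.+1 (X m.+1 w))%R].
have mA k : measurable (A k) by exact: measurable_ge_partial_sum.
have limsupA0 : P (lim_sup_set A) = 0.
  apply: lim_sup_set_cvg0 => //.
  apply: (@le_lt_trans _ _ (C / (1 - r))%:E); last exact: ltry.
  apply: lime_le; first by apply: is_cvg_nneseries => k _ _; exact: measure_ge0.
  apply: nearW => N; apply: (@le_trans _ _ (\sum_(0 <= k < N) (C * r ^+ k)%:E)%E).
    by apply: lee_sum => k _; exact: PA.
  by rewrite sumEFin lee_fin; apply: geometric_le_lim; rewrite // ger0_norm // ltW.
exists (lim_sup_set A); split => //.
  by apply: bigcap_measurable => // k _; apply: bigcup_measurable => l _; exact: mA.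
move=> w not_cvg N _; apply: contrapT => not_A; apply: not_cvg => /=.
apply: (@expR_cvg0_of_le_linear _ _ (del / 4)); first by rewrite divr_gt0.
exists N => // k /= Nk; apply: ltW; rewrite ltNge; apply/negP => Ak.
by apply: not_A; exists k.
Qed.

Lemma ae_expR_periodic_partial_sum_cvg0 (h : nat -> bool -> R) n : (0 < n)%N ->
  (forall m b, h (m + n)%N b = h m b) -> (forall m, p (m + n)%N = p m) ->
  \sum_(m < n) \sum_(b : bool) bernoulli_pmf (p m.+1) b * h m.+1 b < 0 ->
  {ae P, forall w, expR (\sum_(m < k) h m.+1 (X m.+1 w)) @[k --> \oo] --> 0}.
Proof.
move=> n_gt0 h_per p_per D_lt0.
pose mean m := \sum_(b : bool) bernoulli_pmf (p m.+1) b * h m.+1 b.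
have mean_per m : mean (m + n)%N = mean m.
  by rewrite /mean -addSn p_per; under eq_bigr do rewrite h_per.
pose B := 1 + \sum_(l < n) `|h l true| + \sum_(l < n) `|h l false|.
have sum_true_ge0 : 0 <= \sum_(l < n) `|h l true| by rewrite sumr_ge0.
have sum_false_ge0 : 0 <= \sum_(l < n) `|h l false| by rewrite sumr_ge0.
have B_gt0 : 0 < B by rewrite /B; lra.
have hB m b : `|h m b| <= B.
  have := periodic_norm_le n_gt0 (h_per^~ true) m.
  have := periodic_norm_le n_gt0 (h_per^~ false) m.
  by case: b; rewrite /B; lra.
pose del := - (\sum_(m < n) mean m) / n%:R.
have del_gt0 : 0 < del by rewrite divr_gt0 ?oppr_gt0 ?ltr0n.
apply: (@ae_expR_partial_sum_cvg0 _ B del (2 * \sum_(m < n) `|mean m|)) => // k.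
apply: le_trans (periodic_partial_sum_le n_gt0 mean_per k) _.
rewrite le_eqVlt; apply/predU1P; left.
by rewrite /del; field; rewrite pnatr_eq0 -lt0n.
Qed.

End independent_bits.

Section bayes_filter.
Variables (R : realType) (q M : nat) (ell : 'rV[R]_q * 'rV[R]_q -> R).
Variables (c : 'I_M -> 'rV[R]_q) (p0 : 'I_M -> R) (xi : nat -> 'rV[R]_q).
Variable d : nat -> bool.
Hypothesis ell01 : forall z, 0 < ell z < 1.
Hypothesis p0_gt0 : forall i, 0 < p0 i.
Hypothesis p0_sum1 : \sum_i p0 i = 1.

Lemma glikE b x y : glik ell b x y = bernoulli_pmf (ell (x, y)) b.
Proof. by case: b; rewrite /glik /= ?expr1 ?expr0 ?mulr1 ?mul1r. Qed.

Lemma glik_gt0 b x y : 0 < glik ell b x y.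
Proof.
have /andP[ell_gt0 ell_lt1] := ell01 (x, y).
by rewrite glikE; case: b => //=; rewrite subr_gt0.
Qed.

Lemma KL_subE n s x y : KL ell n xi s y - KL ell n xi s x =
  \sum_(m < n) \sum_(b : bool) bernoulli_pmf (ell (s, xi m.+1)) b *
     (ln (glik ell b x (xi m.+1)) - ln (glik ell b y (xi m.+1))).
Proof.
rewrite /KL -sumrB big_add1 /= big_mkord; apply: eq_bigr => m _.
rewrite big_bool /= !glikE /bernoulli_pmf.
have /andP[? ?] := ell01 (s, xi m.+1).
have /andP[? ?] := ell01 (x, xi m.+1).
have /andP[? ?] := ell01 (y, xi m.+1).
by rewrite !ln_div ?posrE ?subr_gt0 //; ring.
Qed.

Local Notation post := (phat ell c p0 xi d).

Lemma phat_gt0 k i : 0 < post k i.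
Proof.
elim: k i => [|k IH] i /=; first exact: p0_gt0.
have term_gt0 j : 0 < glik ell (d k.+1) (c j) (xi k.+1) * post k j.
  by rewrite mulr_gt0 ?glik_gt0.
rewrite divr_gt0 //; apply: lt_le_trans (term_gt0 i) _.
by apply: ler_term_sum => j; exact: ltW.
Qed.

Lemma phat_le1 k i : post k i <= 1.
Proof.
case: k => [|k] /=.
  by rewrite -p0_sum1; apply: ler_term_sum => j; exact: ltW.
have term_ge0 j : 0 <= glik ell (d k.+1) (c j) (xi k.+1) * post k j.
  by rewrite mulr_ge0 // ltW ?glik_gt0 ?phat_gt0.
have term_gt0 : 0 < glik ell (d k.+1) (c i) (xi k.+1) * post k i.
  by rewrite mulr_gt0 ?glik_gt0 ?phat_gt0.
rewrite ler_pdivrMr ?mul1r; first exact: ler_term_sum.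
exact: lt_le_trans term_gt0 (ler_term_sum i term_ge0).
Qed.

Lemma phat_cross k i j :
  post k i * (p0 j * \prod_(m < k) glik ell (d m.+1) (c j) (xi m.+1)) =
  post k j * (p0 i * \prod_(m < k) glik ell (d m.+1) (c i) (xi m.+1)).
Proof.
elim: k => [|k IH] /=; first by rewrite !big_ord0 !mulr1 mulrC.
rewrite !big_ord_recr /=.
set Z := \sum_(l < M) _.
set gi := glik ell (d k.+1) (c i) (xi k.+1).
set gj := glik ell (d k.+1) (c j) (xi k.+1).
transitivity (gi * gj / Z *
  (post k i * (p0 j * \prod_(m < k) glik ell (d m.+1) (c j) (xi m.+1)))); first ring.
by rewrite IH; ring.
Qed.

Lemma phat_le_expR_llr k i j : post k i <= p0 i / p0 j *
  expR (\sum_(m < k) (ln (glik ell (d m.+1) (c i) (xi m.+1))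
                      - ln (glik ell (d m.+1) (c j) (xi m.+1)))).
Proof.
rewrite expR_sum; under eq_bigr do rewrite expRB !lnK ?posrE ?glik_gt0 //.
rewrite prodf_div.
have G_gt0 l : 0 < \prod_(m < k) glik ell (d m.+1) (c l) (xi m.+1).
  by apply: prodr_gt0 => m _; exact: glik_gt0.
rewrite -(ler_pM2r (mulr_gt0 (p0_gt0 j) (G_gt0 j))) phat_cross.
rewrite [leRHS](_ : _ = p0 i * \prod_(m < k) glik ell (d m.+1) (c i) (xi m.+1)).
  by rewrite ler_piMl ?phat_le1 // ltW // mulr_gt0.
by field; rewrite !gt_eqF.
Qed.

End bayes_filter.

Theorem theorem4 (R : realType) (q : nat) (S : set 'rV[R]_q)
  (ell : 'rV[R]_q * 'rV[R]_q -> R)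
  (s : 'rV[R]_q) (xi : nat -> 'rV[R]_q) (n : nat)
  (dT : measure_display) (T : measurableType dT) (P : probability T R)
  (d : nat -> T -> bool)
  (M : nat) (c : 'I_M -> 'rV[R]_q) (p0 : 'I_M -> R) :
  compact S ->
  continuous ell ->
  (forall z, 0 < ell z < 1) ->
  s \in S ->
  (forall k, xi (k + n)%N = xi k) ->
  (forall k b, measurable [set w | d k w = b]) ->
  mutually_independent_bool P d ->
  (forall k, (1 <= k)%N -> P [set w | d k w = true] = (ell (s, xi k))%:E) ->
  injective c ->
  (forall i, c i \in S) ->
  (forall i, 0 < p0 i < 1) ->
  \sum_(i < M) p0 i = 1 ->
  forall i : 'I_M,
    ~ {ae P, forall w, (fun k => phat ell c p0 xi (d^~ w) k i) @ \oo --> (0 : R)} ->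
    forall j : 'I_M, KL ell n xi s (c i) <= KL ell n xi s (c j).
Proof.
move=> _ _ ell01 _ xi_per mX indX Pd1 _ _ p0_01 p0_sum1 i not_ae j.
have p0_gt0 l : 0 < p0 l by case/andP: (p0_01 l).
have [->|n_gt0] := posnP n; first by rewrite /KL !big_geq.
rewrite leNgt; apply/negP; rewrite -subr_lt0 KL_subE // => drift_lt0.
apply: not_ae.
pose h m b := ln (glik ell b (c i) (xi m)) - ln (glik ell b (c j) (xi m)).
have h_per m b : h (m + n)%N b = h m b by rewrite /h xi_per.
have p_per m : ell (s, xi (m + n)%N) = ell (s, xi m) by rewrite xi_per.
have := ae_expR_periodic_partial_sum_cvg0 mX indX Pd1 n_gt0 h_per p_per drift_lt0.
apply: filterS => w llr_cvg0.
apply: (@squeeze_cvgr _ _ _ _ (fun _ => 0)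
  (fun k => p0 i / p0 j * expR (\sum_(m < k) h m.+1 (d m.+1 w)))).
- by apply: nearW => k; rewrite ltW ?phat_gt0 //= phat_le_expR_llr.
- exact: cvg_cst.
- rewrite -[X in _ --> X](mulr0 (p0 i / p0 j)).
  exact: (cvgM (cvg_cst _) llr_cvg0).
Qed.
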